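(* Suppose $A$ is indecomposable. Let $K\subsetneq I$ be such that the subgroup $W_K=\langle r_i:i\in K\rangle$ of $W^v$ is infinite, and let $u\in\mathbb A$ satisfy $\alpha_i(u)=0$ for $i\in K$ and $\alpha_i(u)>0$ for $i\in I\setminus K$. Then there exists $w\in W^v$ such that the orbit $W_K\cdot w(u)$ is infinite (equivalently, the set of vectorial faces $W_K\cdot w\cdot F^v$ is infinite, where $F^v=\{v:\alpha_i(v)=0\ (i\in K),\ \alpha_i(v)>0\ (i\notin K)\}$ is the vectorial face containing $u$, whose fixer in $W^v$ is $W_K$).
   Context: $I$ finite, $A=(a_{i,j})_{i,j\in I}$ a generalized Cartan matrix ($a_{i,i}=2$, $a_{i,j}\in\mathbb Z_{\le0}$ for $i\ne j$, $a_{i,j}=0\iff a_{j,i}=0$); $A$ is indecomposable if the graph on $I$ with edges $\{i,j\}$ for $a_{i,j}\neq0$ is connected. $\mathbb A$ is a finite-dimensional real vector space with linearly independent families $(\alpha_i)_{i\in I}\subset\mathbb A^*$, $(\alpha_i^\vee)_{i\in I}\subset\mathbb A$ with $\alpha_j(\alpha_i^\vee)=a_{i,j}$; $r_i(v)=v-\alpha_i(v)\alpha_i^\vee$; $W^v=\langle r_i:i\in I\rangle$. *)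

From HB Require Import structures.
From mathcomp Require Import all_boot all_order all_algebra.
Set Implicit Arguments. Unset Strict Implicit. Unset Printing Implicit Defensive.
Import Order.TTheory GRing.Theory Num.Theory.
Local Open Scope ring_scope.

(* The real vector space A is modelled as 'rV[R]_n (row vectors);
   linear forms on it are column vectors 'cV[R]_n, evaluated by [pairing]. *)
Definition pairing (R : fieldType) (n : nat) (a : 'cV[R]_n) (v : 'rV[R]_n) : R :=
  (v *m a) 0 0.

Definition is_GCM (I : finType) (A : I -> I -> int) : Prop :=
  [/\ forall i, A i i = 2%:Z,
      forall i j, i != j -> A i j <= 0
    & forall i j, A i j = 0 <-> A j i = 0].

Definition indecomposable (I : finType) (A : I -> I -> int) : Prop :=
  forall i j : I, connect (fun x y => A x y != 0) i j.

(* Matrix of the reflection r_i(v) = v - alpha_i(v) alpha_i^vee, acting on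
   row vectors by right multiplication: v *m refl_mx a c = v - pairing a v *: c. *)
Definition refl_mx (R : fieldType) (n : nat) (a : 'cV[R]_n) (c : 'rV[R]_n)
  : 'M[R]_n := 1%:M - a *m c.

(* The subgroup W_K generated by the reflections r_i, i in K: the set of all
   finite products of generators (each r_i is an involution, so this is the
   generated subgroup). *)
Definition W_sub (R : fieldType) (n : nat) (I : finType)
  (alpha : I -> 'cV[R]_n) (coroot : I -> 'rV[R]_n) (K : {set I}) (M : 'M[R]_n)
  : Prop :=
  exists s : seq I, all (fun i => i \in K) s /\
    M = \big[mulmx/1%:M]_(i <- s) refl_mx (alpha i) (coroot i).

Definition finite_pred (T : eqType) (P : T -> Prop) : Prop :=
  exists l : seq T, forall x, P x -> x \in l.

From HB Require Import structures.
From mathcomp Require Import all_boot all_order all_algebra.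
From Stdlib Require Import ClassicalEpsilon Classical_Prop.
Import Order.TTheory GRing.Theory Num.Theory.
Set Implicit Arguments. Unset Strict Implicit. Unset Printing Implicit Defensive.
Local Open Scope ring_scope.

(* Contrapositive: if every orbit [W_K (u w)], [w] in [W], is finite, then so is
   [W_K].  Walking along the connected Dynkin diagram from an index outside [K]
   gives, for every [i], some [w] with [alpha_i (u w) <> 0]; since
   [u w - u w r_i = alpha_i (u w) alpha_i^vee], every coroot then has a finite
   [W_K]-orbit.  Put the coroots as the rows of a matrix [C].  Summing [Z Z^T]
   over the finite orbit of [C] gives a positive definite form [Q] on the
   coefficient space, invariant under the reflections induced by the [r_k],
   [k] in [K]; invariance forces [C alpha_k] to be a nonzero multiple of
   [Q e_k^T], so these vectors are independent and [W_K] acts faithfully on the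
   orbit of [C].  Only [alpha_i(u) > 0] for one [i] outside [K] is used; the
   vanishing of [alpha_i(u)] on [K] and the freeness of the roots are not. *)

Section Reflections.
Variables (R : fieldType) (n : nat).

Lemma mulmx_refl (a : 'cV[R]_n) (c v : 'rV[R]_n) :
  v *m refl_mx a c = v - pairing a v *: c.
Proof.
rewrite /refl_mx /pairing mulmxBr mulmx1 mulmxA.
by rewrite {1}(mx11_scalar (v *m a)) mul_scalar_mx.
Qed.

Lemma pairing_refl (a b : 'cV[R]_n) (c v : 'rV[R]_n) :
  pairing b (v *m refl_mx a c) = pairing b v - pairing a v * pairing b c.
Proof. by rewrite mulmx_refl /pairing mulmxBl -scalemxAl !mxE. Qed.

Lemma mulmx_refl_id p (Y : 'M[R]_(p, n)) (a : 'cV[R]_n) (c : 'rV[R]_n) :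
  Y *m a = 0 -> Y *m refl_mx a c = Y.
Proof. by move=> Ya0; rewrite /refl_mx mulmxBr mulmx1 mulmxA Ya0 mul0mx subr0. Qed.

Variables (g : 'cV[R]_n) (e : 'rV[R]_n).
Hypothesis eg2 : e *m g = (2 : R)%:M.

Lemma mulmx_refl_root : e *m refl_mx g e = - e.
Proof.
rewrite /refl_mx mulmxBr mulmx1 mulmxA eg2 mul_scalar_mx.
by rewrite scaler_nat mulr2n opprD addrA subrr sub0r.
Qed.

Lemma refl_mx_invol : refl_mx g e *m refl_mx g e = 1%:M.
Proof. by rewrite [LHS]mulmxBl mul1mx -mulmxA mulmx_refl_root mulmxN opprK subrK. Qed.

Lemma refl_invariant_form (Q : 'M[R]_n) :
  refl_mx g e *m Q *m (refl_mx g e)^T = Q ->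
  2 *: (Q *m e^T) = (e *m Q *m e^T) 0 0 *: g.
Proof.
move=> invQ; set E := refl_mx g e.
have E_Qe : E *m (Q *m e^T) = - (Q *m e^T).
  by rewrite -[in RHS]invQ -!mulmxA -trmx_mul mulmx_refl_root raddfN !mulmxN opprK.
have : E *m (Q *m e^T) = Q *m e^T - (e *m Q *m e^T) 0 0 *: g.
  by rewrite /E /refl_mx mulmxBl mul1mx -!mulmxA [X in g *m X]mx11_scalar mul_mx_scalar.
rewrite E_Qe scaler_nat mulr2n => Qe_eq.
by rewrite -{2}[Q *m e^T]opprK Qe_eq opprB addrC subrK.
Qed.

Lemma refl_mx_intertwine m (C : 'M[R]_(m, n)) j (a : 'cV[R]_n) (c : 'rV[R]_n) :
  row j C = c -> refl_mx (C *m a) (delta_mx 0 j) *m C = C *m refl_mx a c.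
Proof.
move=> Cj; rewrite /refl_mx mulmxBl mulmxBr mul1mx mulmx1 -!mulmxA -rowE Cj.
by rewrite mulmxA.
Qed.

End Reflections.

Lemma row_free_of_mulmx_eq0 (R : fieldType) m n (A : 'M[R]_(m, n)) :
  (forall a : 'rV[R]_m, a *m A = 0 -> a = 0) -> row_free A.
Proof.
move=> A_inj; rewrite -kermx_eq0; apply/eqP/row_matrixP => i.
by rewrite row0; apply: A_inj; rewrite -row_mul mulmx_ker row0.
Qed.

Lemma exists_retraction (R : fieldType) m n (I : finType) (K : {set I})
    (b : I -> 'cV[R]_n) (C : 'M[R]_(m, n)) (Q : 'M[R]_m) (j : I -> 'I_m) (d : I -> R) :
  Q \in unitmx -> {in K &, injective j} ->
  (forall k, k \in K -> d k != 0 /\ Q *m delta_mx (j k) 0 = d k *: (C *m b k)) ->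
  exists S : 'M[R]_(n, m), forall k, k \in K -> S *m C *m b k = b k.
Proof.
move=> Qunit j_inj Qdelta.
exists ((\sum_(k in K) d k *: (b k *m delta_mx 0 (j k))) *m invmx Q) => k kK.
have [dk_neq0 Qdk] := Qdelta k kK.
have Cbk : C *m b k = (d k)^-1 *: (Q *m delta_mx (j k) 0).
  by rewrite Qdk scalerA mulVf ?scale1r.
rewrite -mulmxA Cbk -scalemxAr mulmxA mulmxKV // mulmx_suml (bigD1 k) //= big1.
  rewrite addr0 -scalemxAl -mulmxA mul_delta_mx [delta_mx 0 0]mx11_scalar mxE.
  by rewrite !eqxx mulmx1 scalerA mulVf // scale1r.
move=> k' /andP [k'K k'k]; rewrite -scalemxAl -mulmxA mul_delta_mx_cond.
by rewrite (inj_in_eq j_inj) // (negbTE k'k) mulr0n mulmx0 scaler0.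
Qed.

Section FiniteOrbits.
Variables (R : pzRingType) (n : nat) (P : 'M[R]_n -> Prop).

Definition mx_orbit p (Y : 'M[R]_(p, n)) (Z : 'M[R]_(p, n)) : Prop :=
  exists x, P x /\ Z = Y *m x.

Lemma finite_orbit0 p : finite_pred (mx_orbit (0 : 'M_(p, n))).
Proof. by exists [:: 0] => Z [x [_ ->]]; rewrite mul0mx inE. Qed.

Lemma finite_orbitD p (Y1 Y2 : 'M[R]_(p, n)) :
  finite_pred (mx_orbit Y1) -> finite_pred (mx_orbit Y2) ->
  finite_pred (mx_orbit (Y1 + Y2)).
Proof.
move=> [l1 H1] [l2 H2]; exists [seq a + b | a <- l1, b <- l2] => Z [x [Px ->]].
by rewrite mulmxDl; apply: allpairs_f; [apply: H1 | apply: H2]; exists x.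
Qed.

Lemma finite_orbit_mull p q (M : 'M[R]_(q, p)) (Y : 'M[R]_(p, n)) :
  finite_pred (mx_orbit Y) -> finite_pred (mx_orbit (M *m Y)).
Proof.
move=> [l H]; exists [seq M *m a | a <- l] => Z [x [Px ->]].
by rewrite -mulmxA; apply: map_f; apply: H; exists x.
Qed.

Lemma finite_orbitZ p (s : R) (Y : 'M[R]_(p, n)) :
  finite_pred (mx_orbit Y) -> finite_pred (mx_orbit (s *: Y)).
Proof.
move=> [l H]; exists [seq s *: a | a <- l] => Z [x [Px ->]].
by rewrite -scalemxAl; apply: map_f; apply: H; exists x.
Qed.

Lemma finite_orbit_rows p (Y : 'M[R]_(p, n)) :
  (forall i, finite_pred (mx_orbit (row i Y))) -> finite_pred (mx_orbit Y).
Proof.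
move=> finY.
have -> : Y = \sum_(i < p) (delta_mx i 0 : 'M[R]_(p, 1)) *m row i Y.
  apply/matrixP => a b; rewrite summxE (bigD1 a) //= big1 ?addr0.
    by rewrite mxE big_ord1 !mxE !eqxx mul1r.
  by move=> i /negbTE ia; rewrite mxE big_ord1 !mxE eq_sym ia mul0r.
apply: (big_ind (fun M => finite_pred (mx_orbit M))) => //.
- exact: finite_orbit0.
- exact: finite_orbitD.
by move=> i _; apply: finite_orbit_mull.
Qed.

End FiniteOrbits.

Lemma finite_pred_enum (T : eqType) (Q : T -> Prop) :
  finite_pred Q -> exists2 s : seq T, uniq s & forall x, x \in s <-> Q x.
Proof.
move=> [l Hl].
pose inQ x := if excluded_middle_informative (Q x) then true else false.
have inQP x : reflect (Q x) (inQ x).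
  by rewrite /inQ; case: excluded_middle_informative => ?; constructor.
exists (undup (filter inQ l)) => [|x]; first exact: undup_uniq.
rewrite mem_undup mem_filter; split; first by case/andP => /inQP.
by move=> Qx; rewrite (Hl x Qx) andbT; apply/inQP.
Qed.

Section WeylSubgroups.
Variables (R : fieldType) (n : nat) (I : finType).
Variables (alpha : I -> 'cV[R]_n) (coroot : I -> 'rV[R]_n).

Local Notation W := (W_sub alpha coroot).
Local Notation r i := (refl_mx (alpha i) (coroot i)).

Lemma W_sub1 (K : {set I}) : W K 1%:M.
Proof. by exists [::]; rewrite big_nil. Qed.

Lemma W_sub_mull (K : {set I}) x k : k \in K -> W K x -> W K (r k *m x).
Proof.
by move=> kK [s [sK ->]]; exists (k :: s); rewrite big_cons /= kK sK.
Qed.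

Lemma W_sub_mulr (K : {set I}) x k : k \in K -> W K x -> W K (x *m r k).
Proof.
move=> kK [s [sK ->]]; exists (rcons s k); rewrite all_rcons kK sK.
split=> //; elim: s {sK} => [|a s IHs] /=.
  by rewrite !big_cons !big_nil mulmx1 mul1mx.
by rewrite !big_cons -IHs mulmxA.
Qed.

Lemma W_sub_fixed (K : {set I}) p (Y : 'M[R]_(p, n)) x :
  (forall k, k \in K -> Y *m alpha k = 0) -> W K x -> Y *m x = Y.
Proof.
move=> Yalpha [s [sK ->]]; elim: s sK => [|a s IHs] /=; first by rewrite big_nil mulmx1.
by case/andP=> aK sK; rewrite big_cons mulmxA mulmx_refl_id ?Yalpha // IHs.
Qed.

(* [v - v r_i = alpha_i(v) alpha_i^vee], so a coroot lies in the span of two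
   points of a [W]-orbit. *)
Lemma finite_orbit_coroot P i (v : 'rV[R]_n) :
  finite_pred (mx_orbit P v) -> finite_pred (mx_orbit P (v *m r i)) ->
  pairing (alpha i) v != 0 -> finite_pred (mx_orbit P (coroot i)).
Proof.
move=> finv finvr vi_neq0.
have -> : coroot i = (pairing (alpha i) v)^-1 *: (v + (-1) *: (v *m r i)).
  by rewrite mulmx_refl scaleN1r opprB addrC subrK scalerA mulVf ?scale1r.
by apply/finite_orbitZ/finite_orbitD => //; apply: finite_orbitZ.
Qed.

(* Rows of [1 - S C] are killed by every [alpha k], hence fixed by [W K]; so
   [x = (1 - S C) + S (C x)] is determined by the point [C x] of the orbit. *)
Lemma W_sub_finite_of_retraction (K : {set I}) m (C : 'M[R]_(m, n)) (S : 'M[R]_(n, m)) :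
  finite_pred (mx_orbit (W K) C) ->
  (forall k, k \in K -> S *m C *m alpha k = alpha k) -> finite_pred (W K).
Proof.
move=> [l Cl] SC_id; exists [seq 1%:M - S *m C + S *m Z | Z <- l] => x Wx.
have fixed : (1%:M - S *m C) *m x = 1%:M - S *m C.
  by apply: W_sub_fixed Wx => k kK; rewrite mulmxBl mul1mx SC_id // subrr.
apply/mapP; exists (C *m x); first by apply: Cl; exists x.
by rewrite -fixed mulmxA -mulmxDl subrK mul1mx.
Qed.

End WeylSubgroups.

Lemma indecomposable_pairing_neq0 (R : numFieldType) n (I : finType)
    (alpha : I -> 'cV[R]_n) (coroot : I -> 'rV[R]_n) (A : I -> I -> int) (v : 'rV[R]_n) j0 :
  (forall i j, A i j = 0 <-> A j i = 0) ->
  (forall i j, pairing (alpha j) (coroot i) = (A i j)%:~R) ->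
  indecomposable A -> pairing (alpha j0) v != 0 ->
  forall i, exists w, W_sub alpha coroot [set: I] w /\ pairing (alpha i) (v *m w) != 0.
Proof.
move=> Asym Apair Aindec vj0 i; have /connectP [p Ap lastp] := Aindec i j0.
rewrite {j0}lastp in vj0; elim: p i Ap vj0 => [|y p IHp] x /=.
  by move=> _ vx; exists 1%:M; rewrite mulmx1; split; first exact: W_sub1.
case/andP=> Axy Ap vp; have [w [Ww vwy]] := IHp y Ap vp.
have [vwx | /negPn/eqP vwx] := boolP (pairing (alpha x) (v *m w) != 0).
  by exists w.
exists (w *m refl_mx (alpha y) (coroot y)); split; first by apply: W_sub_mulr; rewrite ?inE.
rewrite mulmxA pairing_refl vwx Apair sub0r oppr_eq0 mulf_neq0 //.
by rewrite intr_eq0; apply: contra Axy => /eqP/Asym ->.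
Qed.

Definition gram (R : comPzRingType) m n (G : seq 'M[R]_(m, n)) : 'M[R]_m :=
  \sum_(Z <- G) Z *m Z^T.

Lemma gram_invariant (R : comPzRingType) m n (G : seq 'M[R]_(m, n)) (E : 'M[R]_m) :
  uniq G -> E *m E = 1%:M -> {in G, forall Z, E *m Z \in G} ->
  E *m gram G *m E^T = gram G.
Proof.
move=> G_uniq EE EG.
have EK : involutive (mulmx E : 'M[R]_(m, n) -> 'M[R]_(m, n)).
  by move=> Z; rewrite mulmxA EE mul1mx.
have G_perm : perm_eq [seq E *m Z | Z <- G] G.
  apply: uniq_perm => //; first by rewrite (map_inj_uniq (inv_inj EK)).
  move=> Z; apply/mapP/idP => [[Z' Z'G ->]|ZG]; first exact: EG.
  by exists (E *m Z); [exact: EG | rewrite EK].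
rewrite /gram mulmx_sumr mulmx_suml -[in RHS](perm_big _ G_perm) big_map.
by apply: eq_bigr => Z _; rewrite trmx_mul !mulmxA.
Qed.

Section PositiveGram.
Variables (R : realFieldType) (m n : nat).

Lemma dot_row_ge0 (v : 'rV[R]_n) : 0 <= (v *m v^T) 0 0.
Proof. by rewrite mxE; apply: sumr_ge0 => i _; rewrite mxE -expr2 sqr_ge0. Qed.

Lemma dot_row_eq0 (v : 'rV[R]_n) : (v *m v^T) 0 0 = 0 -> v = 0.
Proof.
rewrite mxE => /eqP; rewrite psumr_eq0 => [/allP v0|i _]; last first.
  by rewrite mxE -expr2 sqr_ge0.
apply/rowP => i; have /implyP := v0 i (mem_index_enum i).
by rewrite mxE -expr2 sqrf_eq0 mxE => /(_ isT)/eqP.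
Qed.

Lemma gram_posdef (G : seq 'M[R]_(m, n)) (C : 'M[R]_(m, n)) (a : 'rV[R]_m) :
  C \in G -> row_free C -> (a *m gram G *m a^T) 0 0 = 0 -> a = 0.
Proof.
move=> CG Cfree.
have dotZ Z : (a *m (Z *m Z^T) *m a^T) 0 0 = ((a *m Z) *m (a *m Z)^T) 0 0.
  by rewrite trmx_mul !mulmxA.
rewrite /gram mulmx_sumr mulmx_suml summxE => /eqP.
rewrite psumr_eq0 => [/allP/(_ C CG)|Z _]; rewrite dotZ ?dot_row_ge0 //=.
by move=> /eqP/dot_row_eq0/eqP; rewrite mulmx_free_eq0 // => /eqP.
Qed.

Lemma gram_unit (G : seq 'M[R]_(m, n)) (C : 'M[R]_(m, n)) :
  C \in G -> row_free C -> gram G \in unitmx.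
Proof.
move=> CG Cfree; rewrite -row_free_unit; apply: row_free_of_mulmx_eq0 => a aQ.
by apply: (gram_posdef CG Cfree); rewrite aQ mul0mx mxE.
Qed.

End PositiveGram.

Section FiniteWeylSubgroup.
Variables (R : realFieldType) (n : nat) (I : finType).
Variables (alpha : I -> 'cV[R]_n) (coroot : I -> 'rV[R]_n) (K : {set I}).
Variables (m : nat) (C : 'M[R]_(m, n)) (j : I -> 'I_m).
Hypothesis C_row : forall k, k \in K -> row (j k) C = coroot k.
Hypothesis coroot_pairing : forall k, k \in K -> pairing (alpha k) (coroot k) = 2.

Local Notation W := (W_sub alpha coroot).

Section OrbitGram.
Variables (G : seq 'M[R]_(m, n)).
Hypotheses (G_uniq : uniq G) (G_orbit : forall Z, Z \in G <-> mx_orbit (W K) C Z).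

(* The Gram form of the orbit of [C] is invariant under the reflection
   [Z |-> E Z] of the coefficient space that corresponds to [r_k]. *)
Lemma gram_orbit_root k (e := delta_mx 0 (j k) : 'rV[R]_m) : k \in K ->
  2 *: (gram G *m e^T) = (e *m gram G *m e^T) 0 0 *: (C *m alpha k).
Proof.
move=> kK; have e_root : e *m (C *m alpha k) = (2 : R)%:M.
  by rewrite mulmxA -rowE C_row // [_ *m _]mx11_scalar -[_ 0 0]/(pairing _ _) coroot_pairing.
apply: refl_invariant_form => //; apply: gram_invariant => //.
  exact: refl_mx_invol.
move=> Z /G_orbit [x [Wx ->]]; apply/G_orbit; exists (refl_mx (alpha k) (coroot k) *m x).
by rewrite mulmxA (refl_mx_intertwine _ (C_row kK)) mulmxA; split=> //; apply: W_sub_mull.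
Qed.

End OrbitGram.

Lemma W_sub_finite_of_finite_orbit :
  row_free C -> {in K &, injective j} ->
  finite_pred (mx_orbit (W K) C) -> finite_pred (W K).
Proof.
move=> C_free j_inj finC; have [G G_uniq G_orbit] := finite_pred_enum finC.
have CG : C \in G.
  by apply/G_orbit; exists 1%:M; rewrite mulmx1; split=> //; apply: W_sub1.
pose e k : 'rV[R]_m := delta_mx 0 (j k).
pose q k : R := (e k *m gram G *m (e k)^T) 0 0.
have [S SC] : exists S : 'M[R]_(n, m), forall k, k \in K -> S *m C *m alpha k = alpha k.
  apply: (@exists_retraction _ _ _ _ _ _ _ _ _ (fun k => q k / 2) (gram_unit CG C_free) j_inj).
  move=> k kK; split.
    rewrite mulf_eq0 invr_eq0 pnatr_eq0 orbF; apply/eqP => /(gram_posdef CG C_free).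
    by move/rowP/(_ (j k)); rewrite !mxE !eqxx /= => /eqP; rewrite oner_eq0.
  rewrite -trmx_delta -[_ *m _^T](scalerK (_ : 2 != 0)) ?pnatr_eq0 //.
  by rewrite (gram_orbit_root G_uniq G_orbit kK) scalerA mulrC.
exact: W_sub_finite_of_retraction finC SC.
Qed.

End FiniteWeylSubgroup.

Lemma coroot_matrix_row_free (R : fieldType) n (I : finType) (coroot : I -> 'rV[R]_n) :
  free [seq coroot i | i <- enum I] ->
  row_free (\matrix_(r < #|I|) coroot (enum_val r)).
Proof.
move=> /(@freeP _ _ _ (map_tuple coroot (enum_tuple I))) free_c.
apply: row_free_of_mulmx_eq0 => a aC0; apply/rowP => r; rewrite mxE.
apply: free_c; rewrite -[RHS]aC0 mulmx_sum_row; apply: eq_bigr => i _.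
by rewrite rowK (nth_map (enum_val i)) -?enum_val_nth // -cardE.
Qed.

Lemma W_sub_finite_of_coroot_orbits (R : realFieldType) n (I : finType)
    (alpha : I -> 'cV[R]_n) (coroot : I -> 'rV[R]_n) (K : {set I}) :
  free [seq coroot i | i <- enum I] ->
  (forall k, k \in K -> pairing (alpha k) (coroot k) = 2) ->
  (forall i, finite_pred (mx_orbit (W_sub alpha coroot K) (coroot i))) ->
  finite_pred (W_sub alpha coroot K).
Proof.
move=> coroot_free coroot_pairing coroot_orbit.
apply: (@W_sub_finite_of_finite_orbit _ _ _ _ _ _ _
  (\matrix_(r < #|I|) coroot (enum_val r)) enum_rank).
- by move=> k _; rewrite rowK enum_rankK.
- exact: coroot_pairing.
- exact: coroot_matrix_row_free.
- by move=> k k' _ _; apply: enum_rank_inj.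
- by apply: finite_orbit_rows => r; rewrite rowK.
Qed.

Theorem mainTheorem12 (R : realFieldType) (n : nat) (I : finType)
  (A : I -> I -> int) (alpha : I -> 'cV[R]_n) (coroot : I -> 'rV[R]_n)
  (HA : is_GCM A)
  (Halpha_free : free [seq alpha i | i <- enum I])
  (Hcoroot_free : free [seq coroot i | i <- enum I])
  (Hpair : forall i j : I, pairing (alpha j) (coroot i) = (A i j)%:~R)
  (Hindec : indecomposable A)
  (K : {set I}) (HK : K \proper [set: I])
  (HWK : ~ finite_pred (W_sub alpha coroot K))
  (u : 'rV[R]_n)
  (Hu0 : forall i, i \in K -> pairing (alpha i) u = 0)
  (Hupos : forall i, i \notin K -> 0 < pairing (alpha i) u) :
  exists w : 'M[R]_n, W_sub alpha coroot [set: I] w /\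
    ~ finite_pred (fun y : 'rV[R]_n =>
        exists x : 'M[R]_n, W_sub alpha coroot K x /\ y = u *m w *m x).
Proof.
have [A_diag _ A_sym] := HA.
apply: NNPP => all_finite; apply: HWK.
have orbit_finite w : W_sub alpha coroot [set: I] w ->
    finite_pred (mx_orbit (W_sub alpha coroot K) (u *m w)).
  by move=> Ww; apply: NNPP => orbit_infinite; apply: all_finite; exists w.
have [_ [j0 _ j0K]] := properP HK.
have u_j0 : pairing (alpha j0) u != 0 by rewrite gt_eqF ?Hupos.
apply: W_sub_finite_of_coroot_orbits Hcoroot_free _ _ => [k _|i].
  by rewrite Hpair A_diag.
have [w [Ww uw_i]] := indecomposable_pairing_neq0 A_sym Hpair Hindec u_j0 i.
apply: finite_orbit_coroot uw_i; first exact: orbit_finite.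
by rewrite -mulmxA; apply/orbit_finite/W_sub_mulr; rewrite ?inE.
Qed.
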